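(* Let $B$ be any group and $p\ge 2$ an integer. If $w\in (B\wr C_p)'$, then $w$ can be written as the wreath recursion $$w=\Big(r_1,r_2,\dots,r_{p-1},\; r_1^{-1}\cdots r_{p-1}^{-1}\prod_{j=1}^{k}[f_j,g_j]\Big)$$ for some $r_1,\dots,r_{p-1},f_j,g_j\in B$ and some $k\le cw(B)$.
   Context: $C_p$ is the cyclic group of order $p$ acting on $\{1,\dots,p\}$ by $\sigma=(1,2,\dots,p)$. Elements of $B\wr C_p=B^p\rtimes C_p$ are written $(b_1,\dots,b_p)\tau$, with multiplication $(g_1,\dots,g_p)\tau\cdot(h_1,\dots,h_p)\rho=(g_1h_{\tau(1)},\dots,g_ph_{\tau(p)})\tau\rho$; $(b_1,\dots,b_p)$ denotes an element with trivial $C_p$-part. The commutator is $[a,b]=aba^{-1}b^{-1}$. The commutator length of $g\in G'$ is the least $n$ such that $g$ is a product of $n$ commutators; the commutator width $cw(G)$ is the maximum of commutator lengths over elements of $G'$. *)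

(* B is an arbitrary (possibly infinite) group, given as a
   record of carrier, operations and group axioms. *)
From mathcomp Require Import all_boot.
Set Implicit Arguments. Unset Strict Implicit. Unset Printing Implicit Defensive.

Record Grp := {
  carrier :> Type;
  gmul : carrier -> carrier -> carrier;
  gone : carrier;
  ginv : carrier -> carrier;
  gmulA : forall x y z, gmul x (gmul y z) = gmul (gmul x y) z;
  gmul1 : forall x, gmul gone x = x;
  gmulV : forall x, gmul (ginv x) x = gone
}.

Definition comm_gen (T : Type) (m : T -> T -> T) (i : T -> T) (a b : T) : T :=
  m a (m b (m (i a) (i b))).

Definition prod_comm_gen (T : Type) (m : T -> T -> T) (i : T -> T) (e : T)
  (l : seq (T * T)) : T :=
  foldr (fun ab acc => m (comm_gen m i ab.1 ab.2) acc) e l.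

Definition prod_comm (B : Grp) (l : seq (B * B)) : B :=
  prod_comm_gen (@gmul B) (@ginv B) (@gone B) l.

Definition in_derived (B : Grp) (g : B) : Prop :=
  exists l : seq (B * B), g = prod_comm l.

Definition cw_le (B : Grp) (n : nat) : Prop :=
  forall g : B, in_derived g ->
    exists l : seq (B * B), size l <= n /\ g = prod_comm l.

(* k <= cw(B)  (cw(B) possibly infinite): k is below every upper bound *)
Definition le_cw (B : Grp) (k : nat) : Prop :=
  forall n, cw_le B n -> k <= n.

(* ---- the wreath product B wr C_p ----
   indices 1..p are represented by 'I_p (0..p-1); sigma = (1,2,...,p) is
   i |-> i+1 mod p; the C_p-part sigma^t is stored as t : 'I_p. *)
Section Wreath.
Variables (B : Grp) (p : nat).

Lemma ord_pos (i : 'I_p) : 0 < p.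
Proof. exact: leq_ltn_trans (leq0n i) (ltn_ord i). Qed.

Definition rotI (t : nat) (i : 'I_p) : 'I_p :=
  Ordinal (ltn_pmod (i + t) (ord_pos i)).

Record wr := Wr { wbase : {ffun 'I_p -> B}; wtop : 'I_p }.

(* (g)tau * (h)rho = (g_i h_{tau(i)}) tau rho *)
Definition wr_mul (x y : wr) : wr :=
  Wr [ffun i => gmul (wbase x i) (wbase y (rotI (wtop x) i))]
     (rotI (wtop y) (wtop x)).

Definition wr_inv (x : wr) : wr :=
  Wr [ffun j => ginv (wbase x (rotI (p - wtop x) j))]
     (Ordinal (ltn_pmod (p - wtop x) (ord_pos (wtop x)))).

End Wreath.

Definition wr_one (B : Grp) (p : nat) (Hp : 0 < p) : wr B p :=
  Wr [ffun => gone B] (Ordinal Hp).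

Definition in_derived_wr (B : Grp) (p : nat) (Hp : 0 < p) (w : wr B p) : Prop :=
  exists l : seq (wr B p * wr B p),
    w = prod_comm_gen (@wr_mul B p) (@wr_inv B p) (wr_one B Hp) l.

(* r_1^{-1} r_2^{-1} ... r_{m}^{-1}, with r indexed from 0 *)
Definition prod_inv (B : Grp) (r : nat -> B) (m : nat) : B :=
  foldr (fun i acc => gmul (ginv (r i)) acc) (gone B) (iota 0 m).

From HB Require Import structures.
From mathcomp Require Import all_boot zify boolp.
Set Implicit Arguments. Unset Strict Implicit. Unset Printing Implicit Defensive.

(* Reading an element of B wr C_p as its C_p-part together with the product of
   its coordinates taken modulo B' is a homomorphism onto the abelian group
   C_p x B/B', because reindexing the coordinates by a rotation only permutes
   the factors of that product.  Hence every w in (B wr C_p)' has trivial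
   C_p-part and coordinate product in B'.  Taking r_i to be the first p-1
   coordinates, the last one is r_1^-1 ... r_(p-1)^-1 c with c in B', and a
   shortest expression of c as a product of commutators has length at most
   cw(B). *)

Section GrpAxioms.
Variable B : Grp.

Lemma gmulVr (x : B) : gmul x (ginv x) = gone B.
Proof.
rewrite -[LHS]gmul1 -(gmulV (ginv x)) -gmulA [gmul (ginv x) _]gmulA.
by rewrite gmulV gmul1 gmulV.
Qed.

Lemma gmul1r (x : B) : gmul x (gone B) = x.
Proof. by rewrite -(gmulV x) gmulA gmulVr gmul1. Qed.

End GrpAxioms.

(* The classical eq/choice structures serve only to make B a MathComp
   groupType, so that the group library applies to it. *)
HB.instance Definition _ (B : Grp) := gen_eqMixin (carrier B).
HB.instance Definition _ (B : Grp) := gen_choiceMixin (carrier B).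
HB.instance Definition _ (B : Grp) :=
  isGroup.Build (carrier B) (@gmulA B) (@gmul1 B) (@gmul1r B) (@gmulV B) (@gmulVr B).

Lemma prod_comm_gen_cons (T : Type) (m : T -> T -> T) (i : T -> T) (e : T) ab l :
  prod_comm_gen m i e (ab :: l) = m (comm_gen m i ab.1 ab.2) (prod_comm_gen m i e l).
Proof. by []. Qed.

Definition eqmod_derived (B : Grp) (x y : B) := in_derived (x / y)%g.
Local Notation "x ≡ y" := (eqmod_derived x y) (at level 70).

Section Derived.
Variable B : Grp.
Local Open Scope group_scope.
Implicit Types x y z : B.

Lemma comm_genE x y : comm_gen (@gmul B) (@ginv B) x y = [~ x^-1, y^-1].
Proof. by rewrite /commg /conjg !invgK. Qed.

Lemma prod_commE (l : seq (B * B)) :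
  prod_comm l = \prod_(ab <- l) [~ ab.1^-1, ab.2^-1].
Proof. by rewrite unlock; elim: l => //= ab l ->; rewrite comm_genE. Qed.

Lemma prod_invE (r : nat -> B) m : prod_inv r m = \prod_(0 <= n < m) (r n)^-1.
Proof. by rewrite unlock /index_iota subn0. Qed.

Lemma in_derived1 : in_derived (1 : B).
Proof. by exists [::]. Qed.

Lemma in_derivedM x y : in_derived x -> in_derived y -> in_derived (x * y).
Proof. by move=> [l ->] [l' ->]; exists (l ++ l'); rewrite !prod_commE big_cat. Qed.

Lemma in_derived_comm x y : in_derived [~ x, y].
Proof. by exists [:: (x^-1, y^-1)]; rewrite prod_commE big_seq1 !invgK. Qed.

Lemma in_derived_comm_gen x y : in_derived (comm_gen (@gmul B) (@ginv B) x y).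
Proof. by rewrite comm_genE; apply: in_derived_comm. Qed.

Lemma in_derivedV x : in_derived x -> in_derived x^-1.
Proof.
move=> [l ->]; exists (map (fun ab => (ab.2, ab.1)) (rev l)).
by rewrite !prod_commE big_map -[l in LHS]revK -prodgV; apply: eq_bigr => ab _; rewrite invgR.
Qed.

Lemma in_derivedJ x y : in_derived x -> in_derived (x ^ y).
Proof.
move=> [l ->]; exists (map (fun ab => (ab.1 ^ y, ab.2 ^ y)) l).
by rewrite !prod_commE big_map conjg_prod; apply: eq_bigr => ab _; rewrite conjRg !conjVg.
Qed.

Lemma eqmod_derived1 x : x ≡ 1 <-> in_derived x.
Proof. by rewrite /eqmod_derived invg1 mulg1. Qed.

Lemma eqmod_derived_refl x : x ≡ x.
Proof. by rewrite /eqmod_derived mulgV; apply: in_derived1. Qed.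

Lemma eqmod_derived_sym x y : x ≡ y -> y ≡ x.
Proof. by move/in_derivedV; rewrite invgF. Qed.

Lemma eqmod_derived_trans y x z : x ≡ y -> y ≡ z -> x ≡ z.
Proof. by move=> xy yz; have := in_derivedM xy yz; rewrite mulgA mulgVK. Qed.

Lemma eqmod_derivedM x1 y1 x2 y2 : x1 ≡ y1 -> x2 ≡ y2 -> x1 * x2 ≡ y1 * y2.
Proof.
move=> e1 e2; have := in_derivedM (in_derivedJ x1^-1 e2) e1.
by rewrite /eqmod_derived /conjg invgK invgM !mulgA mulgVK.
Qed.

Lemma eqmod_derivedV x y : x ≡ y -> x^-1 ≡ y^-1.
Proof.
move/eqmod_derived_sym/(in_derivedJ x).
by rewrite /eqmod_derived /conjg invgK !mulgA mulgVK.
Qed.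

Lemma eqmod_derivedC x y : x * y ≡ y * x.
Proof. by rewrite /eqmod_derived invgM -mulgA; apply: in_derived_comm_gen. Qed.

Lemma eqmod_derived_rot (I : Type) n (s : seq I) (F : I -> B) :
  \prod_(i <- rot n s) F i ≡ \prod_(i <- s) F i.
Proof.
by rewrite /rot -[in X in _ ≡ X](cat_take_drop n s) !big_cat; apply: eqmod_derivedC.
Qed.

Lemma eqmod_derived_perm (I : eqType) (s t : seq I) (F : I -> B) :
  perm_eq s t -> \prod_(i <- s) F i ≡ \prod_(i <- t) F i.
Proof.
elim: s t => [|x s IHs] t.
  by rewrite perm_sym => /perm_nilP ->; apply: eqmod_derived_refl.
rewrite perm_sym => /perm_consP [n [u [rot_t perm_us]]].
apply: eqmod_derived_trans _ (eqmod_derived_rot n t F).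
rewrite rot_t !big_cons; apply: eqmod_derivedM (eqmod_derived_refl _) _.
by apply: IHs; rewrite perm_sym.
Qed.

Lemma eqmod_derived_prodM (I : Type) (s : seq I) (F G : I -> B) :
  \prod_(i <- s) (F i * G i) ≡ \prod_(i <- s) F i * \prod_(i <- s) G i.
Proof.
elim: s => [|x s IHs]; first by rewrite !big_nil mulg1; apply: eqmod_derived_refl.
rewrite !big_cons; apply: eqmod_derived_trans (eqmod_derivedM (eqmod_derived_refl _) IHs) _.
rewrite -!mulgA; apply: eqmod_derivedM (eqmod_derived_refl _) _.
by rewrite !mulgA; apply: eqmod_derivedM (eqmod_derivedC _ _) (eqmod_derived_refl _).
Qed.

End Derived.

Lemma perm_map_index_enum (T : finType) (f : T -> T) :
  injective f -> perm_eq (map f (index_enum T)) (index_enum T).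
Proof.
move=> f_inj; have [g _ gK] := injF_bij f_inj.
have e_uniq := index_enum_uniq T.
apply: uniq_perm => //; first by rewrite map_inj_uniq.
by move=> y; rewrite -[y]gK map_f ?mem_index_enum.
Qed.

Section WreathCoordinates.
Variables (B : Grp) (p : nat).
Local Open Scope group_scope.
Implicit Types x y : wr B p.

Definition coord_prod x : B := \prod_(i < p) wbase x i.

Lemma rotI_inj t : injective (@rotI p t).
Proof.
move=> i j /(congr1 val) /eqP /=; rewrite eqn_modDr => /eqP.
by rewrite !modn_small // => /val_inj.
Qed.

Lemma eqmod_derived_prod_rotI t (F : 'I_p -> B) :
  \prod_(i < p) F (rotI t i) ≡ \prod_(i < p) F i.
Proof.
rewrite -(big_map _ xpredT).
exact/eqmod_derived_perm/perm_map_index_enum/rotI_inj.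
Qed.

Lemma coord_prodM x y : coord_prod (wr_mul x y) ≡ coord_prod x * coord_prod y.
Proof.
rewrite /coord_prod /=; under eq_bigr do rewrite ffunE.
apply: eqmod_derived_trans (eqmod_derived_prodM _ _ _) _.
exact/eqmod_derivedM/eqmod_derived_prod_rotI/eqmod_derived_refl.
Qed.

Lemma coord_prodV x : coord_prod (wr_inv x) ≡ (coord_prod x)^-1.
Proof.
rewrite /coord_prod /=; under eq_bigr do rewrite ffunE.
rewrite prodgV; apply/eqmod_derivedV.
apply: eqmod_derived_trans (eqmod_derived_prod_rotI _ _).
by apply: eqmod_derived_perm; rewrite perm_rev.
Qed.

Lemma coord_prod_comm x y : coord_prod (comm_gen (@wr_mul B p) (@wr_inv B p) x y) ≡ 1.
Proof.
set cx := coord_prod x; set cy := coord_prod y.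
have cV : coord_prod (wr_mul (wr_inv x) (wr_inv y)) ≡ cx^-1 * cy^-1.
  apply: eqmod_derived_trans (coord_prodM _ _) _.
  exact: eqmod_derivedM (coord_prodV _) (coord_prodV _).
have cyV : coord_prod (wr_mul y (wr_mul (wr_inv x) (wr_inv y))) ≡ cy * (cx^-1 * cy^-1).
  exact: eqmod_derived_trans (coord_prodM _ _) (eqmod_derivedM (eqmod_derived_refl _) cV).
apply: eqmod_derived_trans (coord_prodM _ _) _.
apply: eqmod_derived_trans (eqmod_derivedM (eqmod_derived_refl _) cyV) _.
exact/eqmod_derived1/in_derived_comm_gen.
Qed.

Lemma wtop_mul x y : nat_of_ord (wtop (wr_mul x y)) = (wtop x + wtop y) %% p.
Proof. by rewrite /= addnC. Qed.

Lemma wtop_comm x y : nat_of_ord (wtop (comm_gen (@wr_mul B p) (@wr_inv B p) x y)) = 0%N.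
Proof.
have ltx := ltn_ord (wtop x); have lty := ltn_ord (wtop y).
rewrite /comm_gen !wtop_mul /= !(modnDml, modnDmr) addnA modnDmr.
have -> : (wtop x + wtop y + (p - wtop x + (p - wtop y)) = p * 2)%N by lia.
by rewrite modnMr.
Qed.

Lemma in_derived_wr_top_coord (p_gt0 : 0 < p) w : in_derived_wr p_gt0 w ->
  nat_of_ord (wtop w) = 0%N /\ in_derived (coord_prod w).
Proof.
case=> l ->; elim: l => [|[x y] l [top0 coord_der]].
  by split=> //; rewrite /coord_prod big1 => [|i _]; [apply: in_derived1 | rewrite ffunE].
rewrite prod_comm_gen_cons; split; first by rewrite wtop_mul wtop_comm top0 mod0n.
apply/eqmod_derived1; rewrite -[1]mulg1.
apply: eqmod_derived_trans (coord_prodM _ _) _.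
exact: eqmod_derivedM (coord_prod_comm _ _) ((eqmod_derived1 _).2 coord_der).
Qed.

Lemma in_derived_last_coord w (r : nat -> B) : 0 < p ->
  (forall i : 'I_p, r i = wbase w i) -> in_derived (coord_prod w) ->
  in_derived ((prod_inv r p.-1)^-1 * r p.-1).
Proof.
move=> p_gt0 r_wbase coord_der; apply/eqmod_derived1.
have coordE : coord_prod w = \prod_(0 <= n < p.-1) r n * r p.-1.
  rewrite -big_nat_recr // prednK // big_mkord.
  by apply: eq_bigr => i _; rewrite r_wbase.
have rev_iota : \prod_(n <- rev (index_iota 0 p.-1)) r n ≡ \prod_(0 <= n < p.-1) r n.
  by apply: eqmod_derived_perm; rewrite perm_rev.
rewrite prod_invE prodgV invgK.
apply: eqmod_derived_trans (eqmod_derivedM rev_iota (eqmod_derived_refl _)) _.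
by rewrite -coordE; apply/eqmod_derived1.
Qed.

End WreathCoordinates.

Lemma shortest_prod_comm (B : Grp) (c : B) :
  in_derived c -> exists fg, c = prod_comm fg /\ le_cw B (size fg).
Proof.
move=> c_der.
have ex_len : exists n, `[< exists fg, size fg = n /\ c = prod_comm fg >].
  by case: (c_der) => fg ->; exists (size fg); apply/asboolP; exists fg.
case: (ex_minnP ex_len) => _ /asboolP [fg [<- c_fg]] fg_min.
exists fg; split=> // n cw_n; have [fg' [fg'_n c_fg']] := cw_n c c_der.
by apply: leq_trans fg'_n; apply: fg_min; apply/asboolP; exists fg'.
Qed.

Theorem mainTheorem2 (B : Grp) (p : nat) (Hp : 2 <= p) (w : wr B p) :
  in_derived_wr (leq_trans (isT : 0 < 2) Hp) w ->
  exists (r : nat -> B) (fg : seq (B * B)),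
    le_cw B (size fg) /\
    nat_of_ord (wtop w) = 0 /\
    (forall i : 'I_p, i < p.-1 -> wbase w i = r (nat_of_ord i)) /\
    (forall i : 'I_p, nat_of_ord i = p.-1 ->
       wbase w i = gmul (prod_inv r p.-1) (prod_comm fg)).
Proof.
move=> w_der; have [top0 coord_der] := in_derived_wr_top_coord w_der.
pose r n := if insub n is Some i then wbase w i else gone B.
have r_wbase (i : 'I_p) : r i = wbase w i by rewrite /r valK.
have [fg [c_fg fg_cw]] :=
  shortest_prod_comm (in_derived_last_coord (ltnW Hp) r_wbase coord_der).
exists r, fg; split=> //; split=> //; split=> [i _|i i_last]; first by rewrite r_wbase.
by rewrite -r_wbase i_last -c_fg; symmetry; apply: mulVKg.
Qed.
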